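(* Let $\mathfrak{M}=\{M^{(\alpha)}:\alpha>0\}$ be a non-quasianalytic weight matrix of R-moderate growth. Then $\mathfrak{K}=\mathfrak{K}(\mathfrak{M})$ has R-moderate growth, and this property of $\mathfrak{K}$ is equivalent to \[ \forall\alpha>0\ \exists\beta>0\ \exists H\ge1\ \forall t\ge0:\ 2\kappa_\beta(t)\le\kappa_\alpha(Ht)+H; \] in particular the latter condition holds.
   Context: A weight sequence is $M=(M_k)_{k\ge0}$ with $M_k=\mu_0\cdots\mu_k$, $1=\mu_0\le\mu_1\le\cdots$, $\mu_k\to\infty$; non-quasianalytic if $\sum_k1/\mu_k<\infty$. A weight matrix is a family $\{M^{(\alpha)}:\alpha>0\}$ of weight sequences with $M^{(\alpha)}\le M^{(\beta)}$ for $\alpha\le\beta$; non-quasianalytic if all members are; it has R-moderate growth if for every $M$ in it there are $N$ in it and $C\ge1$ with $M_{j+k}\le C^{j+k}N_jN_k$ for all $j,k\in\mathbb{N}$. Associated function $\omega_M(t)=\sup_k\log(t^kM_0/M_k)$, $\omega_M(0)=0$; $\widetilde\omega_M(t)=\omega_M(t)+\log(1+t^2)$. For non-quasianalytic pre-weight $\omega$: $\kappa_\omega(t)=\int_1^\infty\omega(ts)s^{-2}ds$, $\varphi^*_\omega(x)=\sup_{y\ge0}(xy-\omega(e^y))$. Here $\kappa_\alpha:=\kappa_{\widetilde\omega_{M^{(\alpha)}}}$ and $K^{(\alpha)}_j=\exp(\varphi^*_{\kappa_\alpha}(j))$ (with $\kappa_\alpha$ replaced by an equivalent normalized function, i.e.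 vanishing on $[0,1]$), $\mathfrak{K}(\mathfrak{M})=\{K^{(\alpha)}\}$. *)

From Stdlib Require Import Reals.
From Coquelicot Require Import Coquelicot.
Open Scope R_scope.

Definition weight_seq_with (M mu : nat -> R) : Prop :=
  mu 0%nat = 1 /\
  (forall k, mu k <= mu (S k)) /\
  is_lim_seq mu p_infty /\
  (forall k, M k = prod_f_R0 mu k).

Definition weight_seq (M : nat -> R) : Prop := exists mu, weight_seq_with M mu.

Definition nonquasianalytic_seq (M : nat -> R) : Prop :=
  exists mu, weight_seq_with M mu /\ ex_series (fun k => / mu k).

Definition seq_le (M N : nat -> R) : Prop := forall k, M k <= N k.

(* A weight matrix {M^(alpha) : alpha > 0}, represented as M : R -> nat -> R
   (only the values at alpha > 0 are relevant). *)
Definition weight_matrix (M : R -> nat -> R) : Prop :=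
  (forall a, 0 < a -> weight_seq (M a)) /\
  (forall a b, 0 < a -> a <= b -> seq_le (M a) (M b)).

Definition nonquasianalytic_matrix (M : R -> nat -> R) : Prop :=
  weight_matrix M /\ forall a, 0 < a -> nonquasianalytic_seq (M a).

Definition R_moderate_growth (M : R -> nat -> R) : Prop :=
  forall a, 0 < a -> exists b, 0 < b /\ exists C, 1 <= C /\
    forall j k : nat, M a (j + k)%nat <= C ^ (j + k) * M b j * M b k.

Definition omega_assoc (M : nat -> R) (t : R) : R :=
  if Rle_dec t 0 then 0
  else real (Sup_seq (fun k => Finite (ln (t ^ k * M 0%nat / M k)))).

Definition omega_tilde (M : nat -> R) (t : R) : R :=
  omega_assoc M t + ln (1 + t ^ 2).

Definition kappa_of (om : R -> R) (t : R) : R :=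
  RInt_gen (fun s => om (t * s) / s ^ 2) (at_point 1) (Rbar_locally p_infty).

Definition phi_star (om : R -> R) (x : R) : R :=
  real (Lub_Rbar (fun z => exists y, 0 <= y /\ z = x * y - om (exp y))).

Definition kappa_mat (M : R -> nat -> R) (a t : R) : R :=
  kappa_of (omega_tilde (M a)) t.

(* normalized equivalent function: vanishes on [0,1], differs from kappa_alpha
   by at most kappa_alpha(1) (kappa_alpha is nondecreasing). *)
Definition kappa0_mat (M : R -> nat -> R) (a t : R) : R :=
  Rmax 0 (kappa_mat M a t - kappa_mat M a 1).

Definition K_mat (M : R -> nat -> R) (a : R) (j : nat) : R :=
  exp (phi_star (kappa0_mat M a) (INR j)).

(* For a weight sequence, [omega_M t] is the finite sum of [ln (t / mu_k)] over the [mu_k < t].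
   R-moderate growth [M_(2j) <= C^(2j) N_j^2] gives [2 omega_N <= omega_M (C .)]; applied twice,
   and with [H >= 4 M_4] absorbing the term [ln (1 + t^2)], it gives
   [2 omega~_N <= omega~_M (H .)], which integrates against [ds / s^2] to
   [2 kappa_N <= kappa_M (H .)].  The integrals converge because
   [max 0 (ln x) <= ln (1 + x^2) / 2] and [int_1^oo ln (1 + (k s)^2) / s^2 ds <= 10 k], so that
   [int_1^b omega~_N (t s) / s^2 ds <= 5 t sum_k 1 / mu_k + 10 t].
   The inequality [2 kappa_b <= kappa_a (H .) + H] survives normalization with a constant [D],
   and splitting [y = y' + ln H] in the Young conjugate gives
   [phi*_a (j + k) <= (j + k) (ln H + D) + phi*_b j + phi*_b k], which is R-moderate growth
   of [K] with [C = H e^D]. *)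

From Stdlib Require Import Reals Lra Lia Psatz Arith.
From Stdlib Require Classical_Prop.
From Coquelicot Require Import Coquelicot.
Open Scope R_scope.

Fixpoint log_quotient_sum (mu : nat -> R) (u : R) (k : nat) : R :=
  match k with
  | 0%nat => 0
  | S k' => log_quotient_sum mu u k' + ln (u / mu (S k'))
  end.

Fixpoint pos_log_quotient_sum (mu : nat -> R) (u : R) (k : nat) : R :=
  match k with
  | 0%nat => 0
  | S k' => pos_log_quotient_sum mu u k' + Rmax 0 (ln (u / mu (S k')))
  end.

Lemma ln_div_le_0 u m : 0 < u -> u <= m -> ln (u / m) <= 0.
Proof.
  intros Hu Hm. rewrite <- ln_1. apply ln_le.
  - apply Rdiv_lt_0_compat; lra.
  - apply Rmult_le_reg_r with m; [lra|].
    unfold Rdiv. rewrite Rmult_assoc, Rinv_l; lra.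
Qed.

Lemma pos_log_quotient_sum_mono mu u k d :
  pos_log_quotient_sum mu u k <= pos_log_quotient_sum mu u (k + d).
Proof.
  induction d as [|d IH]; [rewrite Nat.add_0_r; lra|].
  rewrite Nat.add_succ_r. simpl.
  pose proof (Rmax_l 0 (ln (u / mu (S (k + d))))). lra.
Qed.

Lemma log_quotient_sum_le_pos mu u k :
  log_quotient_sum mu u k <= pos_log_quotient_sum mu u k.
Proof.
  induction k as [|k IH]; simpl; [lra|].
  pose proof (Rmax_r 0 (ln (u / mu (S k)))). lra.
Qed.

Section WeightSequence.

Variables (M mu : nat -> R).
Hypothesis HM : weight_seq_with M mu.

Lemma weight_quotient_le i j : (i <= j)%nat -> mu i <= mu j.
Proof.
  destruct HM as [_ [Hmono _]].
  induction 1 as [|j _ IH]; [lra|]. specialize (Hmono j). lra.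
Qed.

Lemma weight_quotient_ge1 k : 1 <= mu k.
Proof.
  destruct HM as [H0 _]. rewrite <- H0. apply weight_quotient_le. lia.
Qed.

Lemma weight_quotient_eventually_ge v : exists K, forall i, (K < i)%nat -> v <= mu i.
Proof.
  destruct HM as [_ [_ [Hlim _]]].
  destruct (proj2 (is_lim_seq_spec mu p_infty) Hlim v) as [N HN].
  exists N. intros i Hi. apply Rlt_le, HN. lia.
Qed.

Lemma weight_seq_0 : M 0%nat = 1.
Proof. destruct HM as [H0 [_ [_ HMmu]]]. rewrite HMmu. exact H0. Qed.

Lemma weight_seq_S k : M (S k) = M k * mu (S k).
Proof. destruct HM as [_ [_ [_ HMmu]]]. rewrite !HMmu. reflexivity. Qed.

Lemma weight_seq_ge1 k : 1 <= M k.
Proof.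
  induction k as [|k IH]; [rewrite weight_seq_0; lra|].
  rewrite weight_seq_S. pose proof (weight_quotient_ge1 (S k)). nra.
Qed.

Lemma weight_seq_pos k : 0 < M k.
Proof. pose proof (weight_seq_ge1 k). lra. Qed.

Lemma ln_weight_ratio u k :
  0 < u -> ln (u ^ k * M 0%nat / M k) = log_quotient_sum mu u k.
Proof.
  intros Hu. rewrite weight_seq_0. induction k as [|k IH]; simpl.
  - rewrite weight_seq_0. replace (1 * 1 / 1) with 1 by field. apply ln_1.
  - rewrite <- IH, weight_seq_S, <- ln_mult.
    + f_equal. pose proof (weight_seq_pos k). pose proof (weight_quotient_ge1 (S k)).
      field. lra.
    + pose proof (weight_seq_pos k). pose proof (pow_lt u k Hu).
      apply Rdiv_lt_0_compat; nra.
    + pose proof (weight_quotient_ge1 (S k)). apply Rdiv_lt_0_compat; lra.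
Qed.

Lemma log_quotient_sum_le_tail u K k : 0 < u ->
  (forall i, (K < i)%nat -> u <= mu i) ->
  log_quotient_sum mu u k <= pos_log_quotient_sum mu u K.
Proof.
  intros Hu HK. destruct (le_lt_dec k K) as [Hk|Hk].
  - replace K with (k + (K - k))%nat by lia.
    eapply Rle_trans; [apply log_quotient_sum_le_pos|apply pos_log_quotient_sum_mono].
  - replace k with (K + (k - K))%nat by lia.
    eapply Rle_trans; [|apply log_quotient_sum_le_pos].
    induction (k - K)%nat as [|d IH]; [rewrite Nat.add_0_r; lra|].
    rewrite Nat.add_succ_r. simpl.
    pose proof (ln_div_le_0 u (mu (S (K + d))) Hu (HK (S (K + d)) ltac:(lia))). lra.
Qed.

Lemma pos_log_quotient_sum_eq u K : 0 < u ->
  (forall i, (i <= K)%nat -> mu i <= u) ->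
  pos_log_quotient_sum mu u K = log_quotient_sum mu u K.
Proof.
  intros Hu. induction K as [|K IH]; intros Hle; [reflexivity|]. simpl.
  rewrite IH by (intros i Hi; apply Hle; lia).
  rewrite Rmax_right; [reflexivity|].
  pose proof (weight_quotient_ge1 (S K)). specialize (Hle (S K) (le_n _)).
  rewrite <- ln_1. apply ln_le; [lra|].
  apply Rmult_le_reg_r with (mu (S K)); [lra|].
  unfold Rdiv. rewrite Rmult_assoc, Rinv_l; lra.
Qed.

Lemma pos_log_quotient_sum_attained u K : 0 < u ->
  exists k, pos_log_quotient_sum mu u K <= log_quotient_sum mu u k.
Proof.
  intros Hu. induction K as [|K [k Hk]]; [exists 0%nat; simpl; lra|].
  destruct (Rle_dec (ln (u / mu (S K))) 0) as [Hneg|Hpos].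
  - exists k. simpl. rewrite Rmax_left by lra. lra.
  - exists (S K). right. apply pos_log_quotient_sum_eq; [exact Hu|].
    intros i Hi. pose proof (weight_quotient_le i (S K) Hi).
    destruct (Rle_lt_dec (mu (S K)) u) as [Hl|Hl]; [lra|].
    exfalso. apply Hpos, ln_div_le_0; lra.
Qed.

Lemma omega_assoc_eq_pos_sum u K : 0 < u ->
  (forall i, (K < i)%nat -> u <= mu i) ->
  omega_assoc M u = pos_log_quotient_sum mu u K.
Proof.
  intros Hu HK. unfold omega_assoc. destruct (Rle_dec u 0) as [Hc|_]; [lra|].
  rewrite (is_sup_seq_unique _ (Finite (pos_log_quotient_sum mu u K))); [reflexivity|].
  intros eps. pose proof (cond_pos eps). split.
  - intros n. simpl. rewrite ln_weight_ratio by exact Hu.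
    pose proof (log_quotient_sum_le_tail u K n Hu HK). lra.
  - destruct (pos_log_quotient_sum_attained u K Hu) as [k Hk].
    exists k. simpl. rewrite ln_weight_ratio by exact Hu. lra.
Qed.

Lemma omega_assoc_ge u k : 0 < u -> ln (u ^ k * M 0%nat / M k) <= omega_assoc M u.
Proof.
  intros Hu. destruct (weight_quotient_eventually_ge u) as [K HK].
  rewrite (omega_assoc_eq_pos_sum u K Hu HK), ln_weight_ratio by exact Hu.
  apply log_quotient_sum_le_tail; assumption.
Qed.

Lemma omega_assoc_le u c : 0 < u ->
  (forall k, ln (u ^ k * M 0%nat / M k) <= c) -> omega_assoc M u <= c.
Proof.
  intros Hu Hc. destruct (weight_quotient_eventually_ge u) as [K HK].
  rewrite (omega_assoc_eq_pos_sum u K Hu HK).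
  destruct (pos_log_quotient_sum_attained u K Hu) as [k Hk].
  specialize (Hc k). rewrite ln_weight_ratio in Hc by exact Hu. lra.
Qed.

Lemma omega_assoc_0 : omega_assoc M 0 = 0.
Proof. unfold omega_assoc. destruct (Rle_dec 0 0); [reflexivity|lra]. Qed.

Lemma omega_assoc_ge0 u : 0 <= omega_assoc M u.
Proof.
  destruct (Rle_dec u 0) as [Hu|Hu].
  - unfold omega_assoc. destruct (Rle_dec u 0); [lra|contradiction].
  - pose proof (omega_assoc_ge u 0 ltac:(lra)) as H0. simpl in H0.
    rewrite weight_seq_0 in H0. replace (1 * 1 / 1) with 1 in H0 by field.
    rewrite ln_1 in H0. exact H0.
Qed.

Lemma omega_assoc_le_mono u v : 0 < u -> u <= v -> omega_assoc M u <= omega_assoc M v.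
Proof.
  intros Hu Huv. apply omega_assoc_le; [exact Hu|]. intros k.
  eapply Rle_trans; [|apply (omega_assoc_ge v k); lra].
  pose proof (weight_seq_pos k). pose proof (pow_lt u k Hu). rewrite weight_seq_0.
  apply ln_le; [apply Rdiv_lt_0_compat; nra|].
  unfold Rdiv. apply Rmult_le_compat_r; [left; apply Rinv_0_lt_compat; lra|].
  apply Rmult_le_compat_r; [lra|]. apply pow_incr. lra.
Qed.

End WeightSequence.

Lemma ln_mul_self x : 0 < x -> ln (x * x) = 2 * ln x.
Proof. intros Hx. rewrite ln_mult by exact Hx. ring. Qed.

Lemma omega_assoc_double Ma ma N nu C :
  weight_seq_with Ma ma -> weight_seq_with N nu -> 0 < C ->
  (forall j, Ma (j + j)%nat <= C ^ (j + j) * N j * N j) ->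
  forall u, 0 < u -> 2 * omega_assoc N u <= omega_assoc Ma (C * u).
Proof.
  intros HWa HWn HC Hmg u Hu.
  cut (omega_assoc N u <= omega_assoc Ma (C * u) / 2); [lra|].
  apply (omega_assoc_le N nu HWn); [exact Hu|]. intros j.
  pose proof (omega_assoc_ge Ma ma HWa (C * u) (j + j) ltac:(nra)) as Hge.
  rewrite (weight_seq_0 _ _ HWa) in Hge. rewrite (weight_seq_0 _ _ HWn).
  pose proof (weight_seq_pos _ _ HWn j). pose proof (weight_seq_pos _ _ HWa (j + j)).
  pose proof (pow_lt u j Hu). specialize (Hmg j).
  assert (Hsq : 2 * ln (u ^ j * 1 / N j) = ln ((u ^ j * u ^ j) / (N j * N j))).
  { rewrite <- ln_mul_self by (apply Rdiv_lt_0_compat; nra). f_equal. field. lra. }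
  cut (2 * ln (u ^ j * 1 / N j) <= omega_assoc Ma (C * u)); [lra|].
  rewrite Hsq. eapply Rle_trans; [|exact Hge]. apply ln_le; [apply Rdiv_lt_0_compat; nra|].
  rewrite Rpow_mult_distr, !pow_add in *.
  apply Rmult_le_reg_r with (N j * N j * Ma (j + j)%nat); [nra|].
  replace (u ^ j * u ^ j / (N j * N j) * (N j * N j * Ma (j + j)%nat))
    with (u ^ j * u ^ j * Ma (j + j)%nat) by (field; lra).
  replace (C ^ j * C ^ j * (u ^ j * u ^ j) * 1 / Ma (j + j)%nat * (N j * N j * Ma (j + j)%nat))
    with (u ^ j * u ^ j * (C ^ j * C ^ j * N j * N j)) by (field; lra).
  apply Rmult_le_compat_l; nra.
Qed.

Lemma ln_one_plus_sq_ge0 x : 0 <= ln (1 + x ^ 2).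
Proof. rewrite <- ln_1. pose proof (pow2_ge_0 x). apply ln_le; lra. Qed.

Lemma omega_tilde_ge0 M mu : weight_seq_with M mu -> forall u, 0 <= omega_tilde M u.
Proof.
  intros HW u. unfold omega_tilde.
  pose proof (omega_assoc_ge0 M mu HW u). pose proof (ln_one_plus_sq_ge0 u). lra.
Qed.

Lemma omega_tilde_0 M : omega_tilde M 0 = 0.
Proof.
  unfold omega_tilde. rewrite (omega_assoc_0 M).
  replace (1 + 0 ^ 2) with 1 by ring. rewrite ln_1. ring.
Qed.

(* [(1 + u^2)^2 <= 4 u^4 <= (H u)^4 / M_4] because [H^4 >= H >= 4 M_4]. *)
Lemma ln_one_plus_sq_double_le_omega M mu H u :
  weight_seq_with M mu -> 4 * M 4%nat <= H -> 1 <= u ->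
  2 * ln (1 + u ^ 2) <= omega_assoc M (H * u).
Proof.
  intros HW HH Hu.
  pose proof (weight_seq_ge1 M mu HW 4) as HM4.
  assert (H1 : 1 <= H) by lra.
  eapply Rle_trans; [|apply (omega_assoc_ge M mu HW (H * u) 4); nra].
  rewrite (weight_seq_0 M mu HW).
  pose proof (pow2_ge_0 u).
  rewrite <- ln_mul_self by lra. apply ln_le; [nra|].
  assert (Hq : (1 + u ^ 2) * (1 + u ^ 2) <= 4 * u ^ 4).
  { assert (1 + u ^ 2 <= 2 * u ^ 2) by nra. replace (u ^ 4) with (u ^ 2 * u ^ 2) by ring.
    nra. }
  assert (H4 : H <= H ^ 4).
  { pose proof (pow_R1_Rle H 3 H1). replace (H ^ 4) with (H * H ^ 3) by ring. nra. }
  apply Rmult_le_reg_r with (M 4%nat); [lra|].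
  replace ((H * u) ^ 4 * 1 / M 4%nat * M 4%nat) with (H ^ 4 * u ^ 4) by (field; lra).
  pose proof (pow_le u 4 ltac:(lra)). nra.
Qed.

Lemma omega_tilde_double Ma ma N nu H :
  weight_seq_with Ma ma -> weight_seq_with N nu -> 4 * Ma 4%nat <= H ->
  (forall u, 0 < u -> 4 * omega_assoc N u <= omega_assoc Ma (H * u)) ->
  forall u, 0 <= u -> 2 * omega_tilde N u <= omega_tilde Ma (H * u).
Proof.
  intros HWa HWn HH Hw u Hu.
  pose proof (weight_seq_ge1 Ma ma HWa 4).
  pose proof (omega_tilde_ge0 Ma ma HWa (H * u)).
  destruct (Req_dec u 0) as [->|Hu0].
  - rewrite omega_tilde_0. lra.
  - specialize (Hw u ltac:(lra)). unfold omega_tilde.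
    assert (HH2 : 16 <= H ^ 2) by nra.
    assert (Hlog : ln (1 + u ^ 2) <= ln (1 + (H * u) ^ 2)).
    { pose proof (pow2_ge_0 u). apply ln_le; [lra|].
      replace ((H * u) ^ 2) with (H ^ 2 * u ^ 2) by ring. nra. }
    destruct (Rle_dec u 1) as [Hu1|Hu1].
    + assert (2 * ln (1 + u ^ 2) <= ln (1 + (H * u) ^ 2)).
      { pose proof (pow2_ge_0 u).
        rewrite <- ln_mul_self by lra. apply ln_le; [nra|].
        replace ((H * u) ^ 2) with (H ^ 2 * u ^ 2) by ring.
        assert (u ^ 2 <= 1) by nra. nra. }
      pose proof (omega_assoc_ge0 Ma ma HWa (H * u)). lra.
    + pose proof (ln_one_plus_sq_double_le_omega Ma ma H u HWa HH ltac:(lra)). lra.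
Qed.

Lemma ex_derive_continuous_R (f : R -> R) x : ex_derive f x -> continuous f x.
Proof. exact (ex_derive_continuous (K := R_AbsRing) (V := R_NormedModule) f x). Qed.

Lemma is_RInt_gen_of_lim (g F : R -> R) (l : R) :
  (forall b, 1 < b -> is_RInt g 1 b (F b)) ->
  filterlim F (Rbar_locally p_infty) (locally l) ->
  is_RInt_gen g (at_point 1) (Rbar_locally p_infty) l.
Proof.
  intros Hint Hlim P HP. destruct (Hlim P HP) as [B HB].
  apply Filter_prod with (Q := fun a => a = 1) (R := fun b => Rmax B 1 < b).
  - reflexivity.
  - exists (Rmax B 1). auto.
  - intros x y -> Hy. exists (F y). pose proof (Rmax_l B 1). pose proof (Rmax_r B 1).
    split; [apply Hint|apply HB]; lra.
Qed.

Lemma is_RInt_gen_le (f g : R -> R) (lf lg : R) :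
  (forall x, 1 <= x -> 0 <= f x <= g x) ->
  is_RInt_gen f (at_point 1) (Rbar_locally p_infty) lf ->
  is_RInt_gen g (at_point 1) (Rbar_locally p_infty) lg -> lf <= lg.
Proof.
  intros Hfg Hf Hg. eapply Rle_trans; [apply Rle_abs|].
  apply (RInt_gen_norm (Fa := at_point 1) (Fb := Rbar_locally p_infty) f g lf lg);
    [| |exact Hf|exact Hg].
  - apply Filter_prod with (Q := fun a => a = 1) (R := fun b => 1 < b).
    + reflexivity.
    + exists 1. auto.
    + intros x y -> Hy. simpl. lra.
  - apply Filter_prod with (Q := fun a => a = 1) (R := fun b => 1 < b).
    + reflexivity.
    + exists 1. auto.
    + intros x y -> Hy z Hz. simpl in Hz. specialize (Hfg z ltac:(lra)).
      change (Rabs (f z) <= g z). rewrite Rabs_right; lra.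
Qed.

Lemma is_RInt_gen_inv_sq c :
  is_RInt_gen (fun s => c / s ^ 2) (at_point 1) (Rbar_locally p_infty) c.
Proof.
  apply is_RInt_gen_of_lim with (F := fun b => c - c / b).
  - intros b Hb.
    replace (c - c / b) with (minus ((fun s => - c / s) b) ((fun s => - c / s) 1))
      by (unfold minus, plus, opp; simpl; field; lra).
    apply (is_RInt_derive (fun s => - c / s)).
    + intros x Hx. rewrite Rmin_left in Hx by lra.
      auto_derive; [lra|]. field. lra.
    + intros x Hx. rewrite Rmin_left in Hx by lra.
      apply ex_derive_continuous_R. auto_derive. intros Hx0. nra.
  - assert (Hinv : is_lim (fun b => / b) p_infty 0).
    { change (Finite 0) with (Rbar_inv p_infty).
      apply is_lim_inv; [apply is_lim_id|discriminate]. }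
    change (is_lim (fun b => c - c / b) p_infty c).
    apply (is_lim_minus (fun _ => c) (fun b => c * / b) p_infty c (c * 0) c).
    + apply is_lim_const.
    + exact (is_lim_scal_l _ c p_infty 0 Hinv).
    + rewrite Rmult_0_r. unfold is_Rbar_minus, is_Rbar_plus; simpl.
      rewrite Ropp_0, Rplus_0_r. reflexivity.
Qed.

Lemma RInt_zero_fun (f : R -> R) a b :
  (forall s, f s = 0) -> ex_RInt f a b /\ RInt f a b = 0.
Proof.
  intros Hf. split.
  - apply ex_RInt_ext with (f := fun _ => 0); [intros; rewrite Hf; reflexivity|].
    apply ex_RInt_const.
  - rewrite (RInt_ext _ (fun _ => 0)) by (intros; apply Hf).
    rewrite RInt_const. apply Rmult_0_r.
Qed.

Lemma RInt_nonneg_le_mono (g : R -> R) :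
  (forall s, 1 <= s -> 0 <= g s) -> (forall b, 1 <= b -> ex_RInt g 1 b) ->
  forall b1 b2, 1 <= b1 -> b1 <= b2 -> RInt g 1 b1 <= RInt g 1 b2.
Proof.
  intros Hpos Hex b1 b2 H1 H12.
  assert (Hex12 : ex_RInt g b1 b2) by (apply (ex_RInt_Chasles_2 g 1); [lra|apply Hex; lra]).
  rewrite <- (RInt_Chasles g 1 b1 b2 (Hex b1 H1) Hex12).
  assert (0 <= RInt g b1 b2) by (apply RInt_ge_0; [lra|exact Hex12|intros; apply Hpos; lra]).
  unfold plus; simpl. lra.
Qed.

(* The improper integral is the supremum of the (nondecreasing) partial integrals. *)
Lemma is_RInt_gen_nonneg_bounded (g : R -> R) (B : R) :
  (forall s, 1 <= s -> 0 <= g s) -> (forall b, 1 <= b -> ex_RInt g 1 b) ->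
  (forall b, 1 <= b -> RInt g 1 b <= B) ->
  exists l, 0 <= l /\ is_RInt_gen g (at_point 1) (Rbar_locally p_infty) l.
Proof.
  intros Hpos Hex HB.
  set (E := fun z : R => exists b, 1 <= b /\ z = RInt g 1 b).
  assert (HE1 : E 0) by (exists 1; split; [lra|rewrite RInt_point; reflexivity]).
  destruct (completeness E) as [l [Hub Hlub]].
  { exists B. intros z [b [Hb ->]]. auto. }
  { exists 0. exact HE1. }
  exists l. split; [apply Hub, HE1|].
  apply is_RInt_gen_of_lim with (F := fun b => RInt g 1 b).
  { intros b Hb. apply (RInt_correct (V := R_CompleteNormedModule)), Hex. lra. }
  intros P [eps HP].
  assert (Hclose : exists b0, 1 <= b0 /\ l - eps < RInt g 1 b0).
  { apply Classical_Prop.NNPP. intros Hno.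
    assert (l <= l - eps); [|pose proof (cond_pos eps); lra].
    apply Hlub. intros z [b [Hb ->]]. apply Rnot_lt_le. intros Hlt. apply Hno. eauto. }
  destruct Hclose as [b0 [Hb0 Hlt]].
  exists b0. intros x Hx. apply HP.
  assert (RInt g 1 x <= l) by (apply Hub; exists x; split; [lra|reflexivity]).
  pose proof (RInt_nonneg_le_mono g Hpos Hex b0 x Hb0 ltac:(lra)).
  change (Rabs (RInt g 1 x - l) < eps). rewrite Rabs_left1; lra.
Qed.

Lemma ln_one_plus_sq_le k : 0 <= k -> ln (1 + k ^ 2) <= 2 * k.
Proof.
  intros Hk. rewrite <- (ln_exp (2 * k)). apply ln_le; [nra|].
  replace (2 * k) with (k + k) by ring. rewrite exp_plus.
  pose proof (exp_ineq1_le k). nra.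
Qed.

(* An antiderivative of [ln (1 + (k s)^2) / s^2] is [- ln (1 + (k s)^2) / s + 2 k atan (k s)]. *)
Lemma RInt_ln_one_plus_sq_le k b : 0 <= k -> 1 <= b ->
  ex_RInt (fun s => ln (1 + (k * s) ^ 2) / s ^ 2) 1 b /\
  RInt (fun s => ln (1 + (k * s) ^ 2) / s ^ 2) 1 b <= 10 * k.
Proof.
  intros Hk Hb.
  set (F := fun s => - ln (1 + (k * s) ^ 2) / s + 2 * k * atan (k * s)).
  assert (HI : is_RInt (fun s => ln (1 + (k * s) ^ 2) / s ^ 2) 1 b (minus (F b) (F 1))).
  { apply (is_RInt_derive F); intros x Hx; rewrite Rmin_left in Hx by lra.
    - unfold F. auto_derive.
      + repeat split; try lra. nra.
      + replace (k * x * (k * x * 1)) with ((k * x) ^ 2) by ring.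
        field. pose proof (pow2_ge_0 (k * x)). lra.
    - apply ex_derive_continuous_R. auto_derive. repeat split; nra. }
  split; [eexists; exact HI|].
  rewrite (is_RInt_unique _ _ _ _ HI).
  change (minus (F b) (F 1)) with (F b - F 1). unfold F.
  replace (k * 1) with k by ring.
  pose proof (ln_one_plus_sq_ge0 (k * b)). pose proof (ln_one_plus_sq_le k Hk).
  pose proof (atan_bound (k * b)). pose proof (atan_bound k). pose proof PI_4.
  assert (0 <= ln (1 + (k * b) ^ 2) / b) by (apply Rdiv_le_0_compat; lra).
  assert (2 * k * (atan (k * b) - atan k) <= 2 * k * 4) by (apply Rmult_le_compat_l; lra).
  unfold Rdiv at 2. rewrite Rinv_1. lra.
Qed.

Lemma Rmax0_ln_le x : 0 < x -> Rmax 0 (ln x) <= / 2 * ln (1 + x ^ 2).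
Proof.
  intros Hx. pose proof (ln_one_plus_sq_ge0 x). unfold Rmax.
  destruct (Rle_dec 0 (ln x)); [|lra].
  replace (ln x) with (/ 2 * ln (x ^ 2)) by (rewrite Rpower.ln_pow by lra; simpl; field).
  apply Rmult_le_compat_l; [lra|]. apply ln_le; [apply pow_lt; lra|lra].
Qed.

Lemma continuous_Rmax0 y : continuous (fun z => Rmax 0 z) y.
Proof.
  apply continuous_ext with (f := fun z => (z + Rabs z) * / 2).
  - intros z. unfold Rmax, Rabs. destruct (Rle_dec 0 z), (Rcase_abs z); lra.
  - apply (continuous_mult (K := R_AbsRing) (fun z => z + Rabs z)); [|apply continuous_const].
    apply (continuous_plus (V := R_NormedModule) (fun z => z) Rabs);
      [apply continuous_id|apply continuous_Rabs].
Qed.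

Lemma continuous_Rmax0_ln t m x : 0 < t -> 0 < m -> 0 < x ->
  continuous (fun s => Rmax 0 (ln (t * s / m))) x.
Proof.
  intros Ht Hm Hx.
  apply (continuous_comp (fun s => ln (t * s / m)) (fun z => Rmax 0 z));
    [|apply continuous_Rmax0].
  apply ex_derive_continuous_R. auto_derive.
  apply Rmult_lt_0_compat; [nra|apply Rinv_0_lt_compat; lra].
Qed.

Lemma RInt_Rmax0_ln_le t m b : 0 < t -> 0 < m -> 1 <= b ->
  ex_RInt (fun s => Rmax 0 (ln (t * s / m)) / s ^ 2) 1 b /\
  RInt (fun s => Rmax 0 (ln (t * s / m)) / s ^ 2) 1 b <= 5 * t / m.
Proof.
  intros Ht Hm Hb.
  set (k := t / m). assert (Hk : 0 <= k) by (apply Rdiv_le_0_compat; lra).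
  destruct (RInt_ln_one_plus_sq_le k b Hk Hb) as [Hex Hle].
  set (g := fun s => ln (1 + (k * s) ^ 2) / s ^ 2) in *.
  assert (Hhex : ex_RInt (fun s => Rmax 0 (ln (t * s / m)) / s ^ 2) 1 b).
  { apply (ex_RInt_continuous (V := R_CompleteNormedModule)). intros z Hz.
    rewrite Rmin_left in Hz by lra.
    apply (continuous_mult (K := R_AbsRing) (fun s => Rmax 0 (ln (t * s / m))) (fun s => / s ^ 2)).
    - apply continuous_Rmax0_ln; lra.
    - apply ex_derive_continuous_R. auto_derive. intros Hz0. nra. }
  split; [exact Hhex|].
  apply Rle_trans with (RInt (fun s => / 2 * g s) 1 b).
  - apply RInt_le; [lra|exact Hhex| |].
    + exact (ex_RInt_scal (V := R_NormedModule) g 1 b (/ 2) Hex).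
    + intros x Hx. unfold g, Rdiv. rewrite <- Rmult_assoc.
      apply Rmult_le_compat_r; [left; apply Rinv_0_lt_compat, pow_lt; lra|].
      replace (k * x) with (t * x / m) by (unfold k; field; lra).
      apply Rmax0_ln_le. apply Rdiv_lt_0_compat; nra.
  - assert (Hscal : RInt (fun s => / 2 * g s) 1 b = / 2 * RInt g 1 b)
      by exact (RInt_scal (V := R_CompleteNormedModule) g 1 b (/ 2) Hex).
    rewrite Hscal.
    replace (5 * t / m) with (/ 2 * (10 * k)) by (unfold k; field; lra).
    apply Rmult_le_compat_l; lra.
Qed.

Lemma RInt_pos_log_quotient_sum_le mu t K b : (forall i, 0 < mu i) -> 0 < t -> 1 <= b ->
  ex_RInt (fun s => pos_log_quotient_sum mu (t * s) K / s ^ 2) 1 b /\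
  RInt (fun s => pos_log_quotient_sum mu (t * s) K / s ^ 2) 1 b
    <= 5 * t * sum_n (fun i => / mu i) K.
Proof.
  intros Hmu Ht Hb. induction K as [|K [Hex Hle]].
  - destruct (RInt_zero_fun (fun s => pos_log_quotient_sum mu (t * s) 0 / s ^ 2) 1 b)
      as [Hex0 ->]; [intros; simpl; unfold Rdiv; ring|].
    split; [exact Hex0|]. rewrite sum_O.
    pose proof (Rinv_0_lt_compat _ (Hmu 0%nat)). nra.
  - set (h := fun s => Rmax 0 (ln (t * s / mu (S K))) / s ^ 2).
    destruct (RInt_Rmax0_ln_le t (mu (S K)) b Ht (Hmu (S K)) Hb) as [Hhex Hhle].
    fold h in Hhex, Hhle.
    assert (Hsplit : forall s, pos_log_quotient_sum mu (t * s) (S K) / s ^ 2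
                               = pos_log_quotient_sum mu (t * s) K / s ^ 2 + h s)
      by (intros; unfold h; simpl; unfold Rdiv; ring).
    split.
    + apply ex_RInt_ext with (f := fun s => plus (pos_log_quotient_sum mu (t * s) K / s ^ 2) (h s));
        [intros; rewrite Hsplit; reflexivity|].
      exact (ex_RInt_plus (V := R_NormedModule) _ _ 1 b Hex Hhex).
    + rewrite (RInt_ext _ _ _ _ (fun s _ => Hsplit s)).
      assert (Hplus : RInt (fun s => pos_log_quotient_sum mu (t * s) K / s ^ 2 + h s) 1 b
                      = RInt (fun s => pos_log_quotient_sum mu (t * s) K / s ^ 2) 1 b + RInt h 1 b)
        by exact (RInt_plus (V := R_CompleteNormedModule) _ _ 1 b Hex Hhex).
      rewrite Hplus.
      rewrite sum_Sn.
      change (plus ?a ?b) with (a + b). rewrite Rmult_plus_distr_l. unfold Rdiv in Hhle. lra.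
Qed.

Lemma sum_n_le_series (a : nat -> R) (l : R) :
  (forall n, 0 <= a n) -> is_series a l -> forall K, sum_n a K <= l.
Proof.
  intros Ha Hl K. apply (is_lim_seq_incr_compare (sum_n a) l Hl).
  intros n. rewrite sum_Sn. specialize (Ha (S n)). unfold plus; simpl. lra.
Qed.

Section KappaOfWeight.

Variables (N nu : nat -> R).
Hypothesis HN : weight_seq_with N nu.
Hypothesis Hnq : ex_series (fun k => / nu k).

Lemma omega_tilde_eq_pos_sum t b : 0 < t -> exists K, forall s, 1 <= s <= b ->
  omega_tilde N (t * s) = pos_log_quotient_sum nu (t * s) K + ln (1 + (t * s) ^ 2).
Proof.
  intros Ht. destruct (weight_quotient_eventually_ge N nu HN (t * b)) as [K HK].
  exists K. intros s Hs. unfold omega_tilde.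
  rewrite (omega_assoc_eq_pos_sum N nu HN (t * s) K) by
    (try nra; intros i Hi; specialize (HK i Hi); nra).
  reflexivity.
Qed.

Lemma RInt_omega_tilde_le (l t b : R) : is_series (fun k => / nu k) l -> 0 <= t -> 1 <= b ->
  ex_RInt (fun s => omega_tilde N (t * s) / s ^ 2) 1 b /\
  RInt (fun s => omega_tilde N (t * s) / s ^ 2) 1 b <= 5 * t * l + 10 * t.
Proof.
  intros Hl Ht Hb.
  assert (Hnu : forall i, 0 < nu i) by (intros i; pose proof (weight_quotient_ge1 N nu HN i); lra).
  destruct (Req_dec t 0) as [->|Ht0].
  - destruct (RInt_zero_fun (fun s => omega_tilde N (0 * s) / s ^ 2) 1 b) as [Hex0 ->].
    { intros s. rewrite Rmult_0_l, (omega_tilde_0 N). unfold Rdiv. ring. }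
    split; [exact Hex0|lra].
  - destruct (omega_tilde_eq_pos_sum t b ltac:(lra)) as [K HK].
    destruct (RInt_pos_log_quotient_sum_le nu t K b Hnu ltac:(lra) Hb) as [Hex1 Hle1].
    destruct (RInt_ln_one_plus_sq_le t b Ht Hb) as [Hex2 Hle2].
    set (f1 := fun s => pos_log_quotient_sum nu (t * s) K / s ^ 2) in *.
    set (f2 := fun s => ln (1 + (t * s) ^ 2) / s ^ 2) in *.
    assert (Heq : forall x, Rmin 1 b < x < Rmax 1 b ->
                    f1 x + f2 x = omega_tilde N (t * x) / x ^ 2).
    { intros x Hx. rewrite Rmin_left, Rmax_right in Hx by lra.
      unfold f1, f2. rewrite HK by lra. unfold Rdiv. ring. }
    assert (Hplus : RInt (fun s => f1 s + f2 s) 1 b = RInt f1 1 b + RInt f2 1 b)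
      by exact (RInt_plus (V := R_CompleteNormedModule) _ _ 1 b Hex1 Hex2).
    split.
    + apply (ex_RInt_ext _ _ _ _ Heq).
      exact (ex_RInt_plus (V := R_NormedModule) _ _ 1 b Hex1 Hex2).
    + rewrite <- (RInt_ext _ _ _ _ Heq), Hplus.
      pose proof (sum_n_le_series (fun i => / nu i) l
                    (fun i => Rlt_le _ _ (Rinv_0_lt_compat _ (Hnu i))) Hl K).
      assert (5 * t * sum_n (fun i => / nu i) K <= 5 * t * l)
        by (apply Rmult_le_compat_l; lra).
      lra.
Qed.

Lemma kappa_omega_tilde_spec t : 0 <= t ->
  is_RInt_gen (fun s => omega_tilde N (t * s) / s ^ 2) (at_point 1) (Rbar_locally p_infty)
    (kappa_of (omega_tilde N) t) /\ 0 <= kappa_of (omega_tilde N) t.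
Proof.
  intros Ht. destruct Hnq as [l Hl].
  destruct (is_RInt_gen_nonneg_bounded (fun s => omega_tilde N (t * s) / s ^ 2)
              (5 * t * l + 10 * t)) as [k [Hk0 Hk]].
  - intros s Hs. apply Rdiv_le_0_compat; [apply (omega_tilde_ge0 N nu HN)|apply pow_lt; lra].
  - intros b Hb. apply (RInt_omega_tilde_le l t b Hl Ht Hb).
  - intros b Hb. apply (RInt_omega_tilde_le l t b Hl Ht Hb).
  - unfold kappa_of. rewrite (is_RInt_gen_unique (V := R_CompleteNormedModule) _ _ Hk).
    split; assumption.
Qed.

Lemma kappa_ge_ln_weight_ratio t n : 0 < t ->
  ln (t ^ n * N 0%nat / N n) <= kappa_of (omega_tilde N) t.
Proof.
  intros Ht. destruct (kappa_omega_tilde_spec t ltac:(lra)) as [Hint Hk0].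
  set (c := ln (t ^ n * N 0%nat / N n)).
  destruct (Rle_dec c 0) as [Hc|Hc]; [lra|].
  apply (is_RInt_gen_le (fun s => c / s ^ 2) (fun s => omega_tilde N (t * s) / s ^ 2));
    [|apply is_RInt_gen_inv_sq|exact Hint].
  intros x Hx. pose proof (pow_lt x 2 ltac:(lra)).
  split; [apply Rdiv_le_0_compat; lra|].
  unfold Rdiv. apply Rmult_le_compat_r; [left; apply Rinv_0_lt_compat; lra|].
  unfold omega_tilde. pose proof (ln_one_plus_sq_ge0 (t * x)).
  pose proof (omega_assoc_ge N nu HN (t * x) n ltac:(nra)).
  assert (c <= ln ((t * x) ^ n * N 0%nat / N n)); [|lra].
  pose proof (weight_seq_pos N nu HN n). pose proof (weight_seq_pos N nu HN 0).
  pose proof (pow_lt t n Ht).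
  apply ln_le; [apply Rdiv_lt_0_compat; nra|].
  unfold Rdiv. apply Rmult_le_compat_r; [left; apply Rinv_0_lt_compat; lra|].
  apply Rmult_le_compat_r; [lra|]. apply pow_incr. nra.
Qed.

End KappaOfWeight.

Lemma kappa_omega_tilde_double Na ma Nb mb H :
  weight_seq_with Na ma -> ex_series (fun k => / ma k) ->
  weight_seq_with Nb mb -> ex_series (fun k => / mb k) -> 0 < H ->
  (forall u, 0 <= u -> 2 * omega_tilde Nb u <= omega_tilde Na (H * u)) ->
  forall t, 0 <= t -> 2 * kappa_of (omega_tilde Nb) t <= kappa_of (omega_tilde Na) (H * t).
Proof.
  intros HWa Hsa HWb Hsb HH Hpt t Ht.
  destruct (kappa_omega_tilde_spec Na ma HWa Hsa (H * t) ltac:(nra)) as [Hia _].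
  destruct (kappa_omega_tilde_spec Nb mb HWb Hsb t Ht) as [Hib _].
  apply (is_RInt_gen_le (fun s => 2 * (omega_tilde Nb (t * s) / s ^ 2))
           (fun s => omega_tilde Na (H * t * s) / s ^ 2));
    [|exact (is_RInt_gen_scal _ 2 _ Hib)|exact Hia].
  intros x Hx. pose proof (pow_lt x 2 ltac:(lra)).
  pose proof (omega_tilde_ge0 Nb mb HWb (t * x)).
  split; [apply Rmult_le_pos; [lra|apply Rdiv_le_0_compat; lra]|].
  replace (2 * (omega_tilde Nb (t * x) / x ^ 2)) with (2 * omega_tilde Nb (t * x) / x ^ 2)
    by (field; lra).
  unfold Rdiv. apply Rmult_le_compat_r; [left; apply Rinv_0_lt_compat; lra|].
  rewrite Rmult_assoc. apply Hpt. nra.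
Qed.

Lemma phi_star_spec (om : R -> R) (x B : R) :
  (forall y, 0 <= y -> x * y - om (exp y) <= B) ->
  (forall y, 0 <= y -> x * y - om (exp y) <= phi_star om x) /\ phi_star om x <= B.
Proof.
  intros HB. unfold phi_star.
  set (E := fun z => exists y, 0 <= y /\ z = x * y - om (exp y)).
  destruct (Lub_Rbar_correct E) as [Hub Hlub].
  assert (HleB : Rbar_le (Lub_Rbar E) B)
    by (apply Hlub; intros z [y [Hy ->]]; apply HB, Hy).
  assert (Hge : forall y, 0 <= y -> Rbar_le (x * y - om (exp y)) (Lub_Rbar E))
    by (intros y Hy; apply Hub; exists y; auto).
  destruct (Lub_Rbar E) as [r| |]; simpl in *.
  - split; assumption.
  - contradiction.
  - contradiction (Hge 0 (Rle_refl 0)).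
Qed.

(* Split [y = y' + ln H]: then [(j + k) y - wa (e^y) <= (j y' - wb (e^y')) + (k y' - wb (e^y'))
   + (j + k) ln H + D]. *)
Lemma phi_star_add_le (wa wb : R -> R) (H D : R) (j k : nat) :
  1 <= H -> 0 <= D -> (forall t, 0 <= wa t) -> wb 1 = 0 ->
  (forall t, 0 <= t -> 2 * wb t <= wa (H * t) + D) ->
  (forall n : nat, exists B, forall y, 0 <= y -> INR n * y - wb (exp y) <= B) ->
  phi_star wa (INR (j + k))
    <= INR (j + k) * (ln H + D) + phi_star wb (INR j) + phi_star wb (INR k).
Proof.
  intros HH HD Hwa Hwb1 Hdouble Hfin.
  assert (Hphi : forall n : nat,
             (forall y, 0 <= y -> INR n * y - wb (exp y) <= phi_star wb (INR n)) /\
             0 <= phi_star wb (INR n)).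
  { intros n. destruct (Hfin n) as [B HB]. destruct (phi_star_spec _ _ _ HB) as [Hle _].
    split; [exact Hle|]. specialize (Hle 0 (Rle_refl 0)). rewrite exp_0, Hwb1 in Hle. lra. }
  destruct (Hphi j) as [Hj Hj0], (Hphi k) as [Hk Hk0].
  assert (HlnH : 0 <= ln H) by (rewrite <- ln_1; apply ln_le; lra).
  destruct (Nat.eq_dec (j + k) 0) as [Hjk|Hjk].
  - rewrite Hjk. simpl INR.
    assert (phi_star wa 0 <= 0); [|lra].
    apply (phi_star_spec wa 0 0). intros y _. specialize (Hwa (exp y)). lra.
  - assert (Hjk1 : 1 <= INR (j + k)) by (apply (le_INR 1); lia).
    apply phi_star_spec. intros y Hy. rewrite plus_INR in *.
    pose proof (Hwa (exp y)).
    destruct (Rle_dec (ln H) y) as [HyH|HyH].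
    + set (y' := y - ln H).
      assert (Hexp : exp y = H * exp y').
      { unfold y'. rewrite <- (exp_ln H) at 1 by lra. rewrite <- exp_plus. f_equal. ring. }
      specialize (Hdouble (exp y') (Rlt_le _ _ (exp_pos y'))). rewrite <- Hexp in Hdouble.
      specialize (Hj y' ltac:(unfold y'; lra)). specialize (Hk y' ltac:(unfold y'; lra)).
      assert (D <= (INR j + INR k) * D) by nra.
      assert (Hsplit : (INR j + INR k) * y
                       = INR j * y' + INR k * y' + (INR j + INR k) * ln H) by (unfold y'; ring).
      rewrite Hsplit, Rmult_plus_distr_l. lra.
    + assert ((INR j + INR k) * y <= (INR j + INR k) * ln H)
        by (apply Rmult_le_compat_l; [lra|lra]).
      assert (0 <= (INR j + INR k) * D) by (apply Rmult_le_pos; lra).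
      rewrite Rmult_plus_distr_l. lra.
Qed.

Lemma phi_star_moderate_growth (wa wb : R -> R) (H D : R) :
  1 <= H -> 0 <= D -> (forall t, 0 <= wa t) -> wb 1 = 0 ->
  (forall t, 0 <= t -> 2 * wb t <= wa (H * t) + D) ->
  (forall n : nat, exists B, forall y, 0 <= y -> INR n * y - wb (exp y) <= B) ->
  exists C, 1 <= C /\ forall j k : nat,
    exp (phi_star wa (INR (j + k)))
      <= C ^ (j + k) * exp (phi_star wb (INR j)) * exp (phi_star wb (INR k)).
Proof.
  intros HH HD Hwa Hwb1 Hdouble Hfin.
  pose proof (exp_ineq1_le D).
  exists (H * exp D). split; [nra|]. intros j k.
  rewrite <- Rpower_pow by (pose proof (exp_pos D); nra). unfold Rpower.
  rewrite ln_mult, ln_exp, <- !exp_plus by (apply exp_pos || lra).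
  destruct (phi_star_add_le wa wb H D j k HH HD Hwa Hwb1 Hdouble Hfin) as [Hlt|Heq].
  - left. apply exp_increasing. lra.
  - right. f_equal. lra.
Qed.

Definition kappa_mat_doubling (M : R -> nat -> R) : Prop :=
  forall a, 0 < a -> exists b, 0 < b /\ exists H, 1 <= H /\
    forall t, 0 <= t -> 2 * kappa_mat M b t <= kappa_mat M a (H * t) + H.

Lemma omega_mat_doubling M : nonquasianalytic_matrix M -> R_moderate_growth M ->
  forall a, 0 < a -> exists b, 0 < b /\ exists C, 1 <= C /\
    forall u, 0 < u -> 2 * omega_assoc (M b) u <= omega_assoc (M a) (C * u).
Proof.
  intros [_ HNQ] HMG a Ha.
  destruct (HMG a Ha) as [b [Hb [C [HC Hmg]]]].
  destruct (HNQ a Ha) as [ma [HWa _]], (HNQ b Hb) as [mb [HWb _]].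
  exists b. split; [exact Hb|]. exists C. split; [exact HC|].
  apply (omega_assoc_double (M a) ma (M b) mb C HWa HWb ltac:(lra)).
  intros j. apply Hmg.
Qed.

(* Doubling [omega] twice gives [4 omega_c <= omega_a (C1 C2 .)]; the summand [4 M_4] of [H]
   absorbs the term [ln (1 + t^2)]. *)
Lemma kappa_mat_doubling_of_moderate_growth M :
  nonquasianalytic_matrix M -> R_moderate_growth M -> kappa_mat_doubling M.
Proof.
  intros HM HMG a Ha.
  destruct (omega_mat_doubling M HM HMG a Ha) as [b [Hb [C1 [HC1 Hab]]]].
  destruct (omega_mat_doubling M HM HMG b Hb) as [c [Hc [C2 [HC2 Hbc]]]].
  destruct HM as [_ HNQ].
  destruct (HNQ a Ha) as [ma [HWa Hsa]], (HNQ c Hc) as [mc [HWc Hsc]].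
  pose proof (weight_seq_ge1 (M a) ma HWa 4) as HMa4.
  set (H := C1 * C2 + 4 * M a 4%nat).
  assert (HH : 1 <= C1 * C2 <= H) by (unfold H; nra).
  assert (Hquad : forall u, 0 < u -> 4 * omega_assoc (M c) u <= omega_assoc (M a) (H * u)).
  { intros u Hu. assert (HC2u : 0 < C2 * u) by nra.
    specialize (Hbc u Hu). specialize (Hab (C2 * u) HC2u).
    assert (omega_assoc (M a) (C1 * (C2 * u)) <= omega_assoc (M a) (H * u)); [|lra].
    apply (omega_assoc_le_mono (M a) ma HWa); [nra|].
    rewrite <- Rmult_assoc. apply Rmult_le_compat_r; lra. }
  exists c. split; [exact Hc|]. exists H. split; [lra|].
  intros t Ht. unfold kappa_mat.
  pose proof (kappa_omega_tilde_double (M a) ma (M c) mc H HWa Hsa HWc Hsc ltac:(lra)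
                (omega_tilde_double (M a) ma (M c) mc H HWa HWc ltac:(unfold H; nra) Hquad) t Ht).
  lra.
Qed.

Lemma phi_star_kappa0_mat_bounded M b mb :
  weight_seq_with (M b) mb -> ex_series (fun k => / mb k) ->
  forall n : nat, exists B, forall y, 0 <= y -> INR n * y - kappa0_mat M b (exp y) <= B.
Proof.
  intros HWb Hsb n. exists (ln (M b n) + kappa_mat M b 1). intros y Hy.
  pose proof (kappa_ge_ln_weight_ratio (M b) mb HWb Hsb (exp y) n (exp_pos y)) as Hk.
  fold (kappa_mat M b (exp y)) in Hk.
  pose proof (weight_seq_pos (M b) mb HWb n).
  pose proof (pow_lt (exp y) n (exp_pos y)).
  rewrite (weight_seq_0 (M b) mb HWb), Rmult_1_r, ln_div, Rpower.ln_pow, ln_exp in Hk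
    by (apply exp_pos || lra).
  pose proof (Rmax_r 0 (kappa_mat M b (exp y) - kappa_mat M b 1)).
  unfold kappa0_mat. nra.
Qed.

Lemma K_mat_moderate_growth M :
  nonquasianalytic_matrix M -> kappa_mat_doubling M -> R_moderate_growth (K_mat M).
Proof.
  intros [_ HNQ] Hdbl a Ha.
  destruct (Hdbl a Ha) as [b [Hb [H [HH Hk]]]].
  destruct (HNQ a Ha) as [ma [HWa Hsa]], (HNQ b Hb) as [mb [HWb Hsb]].
  pose proof (proj2 (kappa_omega_tilde_spec (M a) ma HWa Hsa 1 ltac:(lra))) as Ha1.
  pose proof (proj2 (kappa_omega_tilde_spec (M b) mb HWb Hsb 1 ltac:(lra))) as Hb1.
  fold (kappa_mat M a 1) in Ha1. fold (kappa_mat M b 1) in Hb1.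
  destruct (phi_star_moderate_growth (kappa0_mat M a) (kappa0_mat M b) H (kappa_mat M a 1 + H))
    as [C [HC HKC]]; try lra.
  - intros t. apply Rmax_l.
  - unfold kappa0_mat. rewrite Rminus_diag. apply Rmax_left. lra.
  - intros t Ht. specialize (Hk t Ht). unfold kappa0_mat, Rmax.
    destruct (Rle_dec 0 (kappa_mat M b t - kappa_mat M b 1)),
             (Rle_dec 0 (kappa_mat M a (H * t) - kappa_mat M a 1)); lra.
  - exact (phi_star_kappa0_mat_bounded M b mb HWb Hsb).
  - exists b. split; [exact Hb|]. exists C. split; [exact HC|exact HKC].
Qed.

Theorem lemma3p3 (M : R -> nat -> R) :
  nonquasianalytic_matrix M ->
  R_moderate_growth M ->
  R_moderate_growth (K_mat M) /\
  (R_moderate_growth (K_mat M) <->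
     (forall a, 0 < a -> exists b, 0 < b /\ exists H, 1 <= H /\
        forall t, 0 <= t -> 2 * kappa_mat M b t <= kappa_mat M a (H * t) + H)) /\
  (forall a, 0 < a -> exists b, 0 < b /\ exists H, 1 <= H /\
        forall t, 0 <= t -> 2 * kappa_mat M b t <= kappa_mat M a (H * t) + H).
Proof.
  intros HM HMG.
  pose proof (kappa_mat_doubling_of_moderate_growth M HM HMG) as Hdbl.
  pose proof (K_mat_moderate_growth M HM Hdbl) as HK.
  split; [exact HK|]. split; [|exact Hdbl].
  split; intros _; assumption.
Qed.
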